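(* On $\mathcal{P}(\mathbb{R}^{2m},\mathbb{C})\cap\ker(\Delta_x,\Delta_u)$, $$AC=\frac{H_x+H_xH_u+H_u}{(H_x+1)(H_u+1)}\,CA-(H_x+H_u)+\frac{S_xS_u}{H_x+1}+\frac{S_uS_x}{H_u+1}.$$
   Context: Fix an integer $m>4$. For $x,u\in\mathbb{R}^m$ let $\mathcal{P}(\mathbb{R}^{2m},\mathbb{C})$ be complex polynomials in $(x,u)$, $\mathcal{P}_{p,q}$ those of bidegree $(p,q)$. Write $|x|^2=\sum x_j^2$, $\langle u,x\rangle=\sum u_jx_j$, $\Delta_x=\sum\partial_{x_j}^2$, $\Delta_u=\sum\partial_{u_j}^2$, $\langle\partial_u,\partial_x\rangle=\sum\partial_{u_j}\partial_{x_j}$, $\langle x,\partial_u\rangle=\sum x_j\partial_{u_j}$, $\langle u,\partial_x\rangle=\sum u_j\partial_{x_j}$, $\mathbb{E}_x=\sum x_j\partial_{x_j}$, $\mathbb{E}_u=\sum u_j\partial_{u_j}$, $H_x=-(\mathbb{E}_x+\frac m2)$, $H_u=-(\mathbb{E}_u+\frac m2)$, $\ker(D_1,\dots,D_r)=\bigcap\ker D_i$. Every $P\in\mathcal{P}_{p,q}$ is uniquely $\sum_{a,b\ge0}|x|^{2a}|u|^{2b}H'_{p-2a,q-2b}$ with $H'_{p-2a,q-2b}\in\mathcal{P}_{p-2a,q-2b}\cap\ker(\Delta_x,\Delta_u)$; $\pi_{\mathfrak{s}}P:=H'_{p,q}$. On $\ker(\Delta_x,\Delta_u)$: $S_x=\pi_{\mathfrak{s}}\langle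 x,\partial_u\rangle$, $S_u=\pi_{\mathfrak{s}}\langle u,\partial_x\rangle$, $A=\pi_{\mathfrak{s}}\langle\partial_u,\partial_x\rangle$, $C=\pi_{\mathfrak{s}}\langle u,x\rangle$. Convention: a quotient $T/G$ with $G$ polynomial in $H_x,H_u$ means $G^{-1}T$; rational functions of $H_x,H_u$ (written to the left or as denominators) are evaluated at the eigenvalues of $H_x,H_u$ on the bihomogeneous output of the operator product. *)

From HB Require Import structures.
From mathcomp Require Import all_boot all_order all_algebra.
From mathcomp Require Import reals.
From mathcomp.real_closed Require Import complex.
From mathcomp Require Import mpoly.
From Stdlib Require Import ClassicalEpsilon.

Set Implicit Arguments.
Unset Strict Implicit.
Unset Printing Implicit Defensive.

Import GRing.Theory.
Local Open Scope ring_scope.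

Section HarmonicOps.
Variables (R : realType) (m : nat).

Definition Cx := complex R.

(* polynomials in (x, u) in R^(2m): variables indexed by 'I_(m + m);
   x_j is variable  lshift m j,  u_j is variable  rshift m j. *)
Definition Pol := {mpoly Cx[m + m]}.

Definition ix (j : 'I_m) : 'I_(m + m) := lshift m j.
Definition iu (j : 'I_m) : 'I_(m + m) := rshift m j.

Definition xv (j : 'I_m) : Pol := 'X_(ix j).
Definition uv (j : 'I_m) : Pol := 'X_(iu j).

Definition dx (j : 'I_m) (P : Pol) : Pol := P^`M(ix j).
Definition du (j : 'I_m) (P : Pol) : Pol := P^`M(iu j).

Definition degx (mo : 'X_{1..m + m}) : nat := (\sum_(j < m) mo (ix j))%N.
Definition degu (mo : 'X_{1..m + m}) : nat := (\sum_(j < m) mo (iu j))%N.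

Definition bihomog (p q : nat) (P : Pol) : Prop :=
  forall mo, mo \in msupp P -> degx mo = p /\ degu mo = q.

Definition normx2 : Pol := \sum_(j < m) xv j ^+ 2.
Definition normu2 : Pol := \sum_(j < m) uv j ^+ 2.
Definition Lapx (P : Pol) : Pol := \sum_(j < m) dx j (dx j P).
Definition Lapu (P : Pol) : Pol := \sum_(j < m) du j (du j P).

Definition harmonic (P : Pol) : Prop := Lapx P = 0 /\ Lapu P = 0.

(* H is the component H'_{0,0} of the (unique) Fischer-type decomposition
   P = sum_{a,b} |x|^{2a} |u|^{2b} H'_{a,b}, with every H'_{a,b} in
   ker(Delta_x, Delta_u).  (On bihomogeneous P of bidegree (p,q) this is
   the decomposition of the paper; in general it is its linear extension.) *)
Definition pis_spec (P H : Pol) : Prop :=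
  exists (N : nat) (h : nat -> nat -> Pol),
    (0 < N)%N /\
    (forall a b, harmonic (h a b)) /\
    P = \sum_(a < N) \sum_(b < N) (normx2 ^+ a * normu2 ^+ b * h a b) /\
    H = h 0%N 0%N.

Definition pis (P : Pol) : Pol :=
  epsilon (inhabits (0 : Pol)) (fun H => pis_spec P H).

Definition x_du (P : Pol) : Pol := \sum_(j < m) xv j * du j P.
Definition u_dx (P : Pol) : Pol := \sum_(j < m) uv j * dx j P.
Definition du_dx (P : Pol) : Pol := \sum_(j < m) du j (dx j P).
Definition ux : Pol := \sum_(j < m) uv j * xv j.

Definition Sx (P : Pol) : Pol := pis (x_du P).
Definition Su (P : Pol) : Pol := pis (u_dx P).
Definition Aop (P : Pol) : Pol := pis (du_dx P).
Definition Cop (P : Pol) : Pol := pis (ux * P).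

(* eigenvalues of H_x = -(E_x + m/2) and H_u = -(E_u + m/2) on P_{p,q} *)
Definition eigHx (p : nat) : Cx := - (p%:R + m%:R / 2%:R).
Definition eigHu (q : nat) : Cx := - (q%:R + m%:R / 2%:R).
End HarmonicOps.

From Pilot Require Import Defs.
From HB Require Import structures.
From mathcomp Require Import all_boot all_order all_algebra.
From mathcomp Require Import reals.
From mathcomp.real_closed Require Import complex.
From mathcomp Require Import mpoly.
From mathcomp Require Import ring.
From Stdlib Require Import ClassicalEpsilon.

Set Implicit Arguments.
Unset Strict Implicit.
Unset Printing Implicit Defensive.

Import GRing.Theory Num.Theory.
Local Open Scope ring_scope.

(* The Fischer inner product <f, g> = sum_mo mo! f_mo conj(g_mo) makes
   multiplication by |x|^2 (resp. |u|^2) adjoint to Delta_x (resp. Delta_u),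
   so a harmonic polynomial in the ideal (|x|^2, |u|^2) vanishes, and
   pi_s f = h as soon as f = h + |x|^2 a + |u|^2 b + |x|^2 |u|^2 c with
   h, a, b, c harmonic.  For a harmonic G with E_x G = d G and E_u G = e G,
   put gam d = m + 2d - 2, which is -2 (H_x + 1) on G, and A = <d_u, d_x>.
   Such decompositions are then explicit:
     <x,d_u> G = S_x G + |x|^2 A G / gam d,
     <u,d_x> G = S_u G + |u|^2 A G / gam e,
     <u,x> G   = C G + |x|^2 S_u G / gam d + |u|^2 S_x G / gam e
                 + |x|^2 |u|^2 A G / (gam d gam e).
   Applying A to the formula for C G and projecting every term with these
   identities gives
     A C H = (1 - 4 / (gam d gam e)) C A H + (d + e + m) H
             - (2 / gam d) S_x S_u H - (2 / gam e) S_u S_x H,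
   which is the claimed identity once H_x + 1 = - gam d / 2 and
   H_u + 1 = - gam e / 2 are substituted. *)

Lemma sum_linear (K : pzRingType) (U V : lmodType K) n (F : 'I_n -> U -> V) :
  (forall j, linear (F j)) -> linear (fun f => \sum_(j < n) F j f).
Proof.
move=> hF a f g; rewrite scaler_sumr -big_split.
by apply: eq_bigr => j _; exact: hF.
Qed.

Lemma linearB3Z (K : pzRingType) (U V : lmodType K) (L : {linear U -> V})
    (a b c : K) (f g h k : U) :
  L (f - a *: g - b *: h - c *: k) = L f - a *: L g - b *: L h - c *: L k.
Proof. by rewrite !linearB !linearZ. Qed.

Lemma congrB3Z (K : pzRingType) (V : lmodType K) (a b c : K)
    (f g h k f' g' h' k' : V) :
  f = f' -> g = g' -> h = h' -> k = k' ->
  f - a *: g - b *: h - c *: k = f' - a *: g' - b *: h' - c *: k'.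
Proof. by move=> -> -> -> ->. Qed.

Lemma scalerVMnK (F : fieldType) (V : lmodType F) (k : F) (v : V) n :
  k != 0 -> k^-1 *: ((k *+ n) *: v) = v *+ n.
Proof. by move=> nz; rewrite -scalerMnl -scalerMnr scalerK. Qed.

Lemma sum_kronecker (V : nmodType) n (F : 'I_n -> V) k :
  \sum_(j < n) F j *+ (j == k) = F k.
Proof. by rewrite (bigD1 k) //= eqxx big1 ?addr0 // => j /negbTE ->. Qed.

Lemma ratio_shift (F : fieldType) (x y : F) : x + 1 != 0 -> y + 1 != 0 ->
  (x + x * y + y) / ((x + 1) * (y + 1)) = 1 - (x + 1)^-1 * (y + 1)^-1.
Proof. by move=> nx ny; field; rewrite nx ny. Qed.

Section MpolyDerivative.
Variables (R : comNzRingType) (n : nat).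

Lemma mderivXX (i k : 'I_n) : ('X_i : {mpoly R[n]})^`M(k) = (i == k)%:R.
Proof.
rewrite mderivX mnm1E; case: eqP => [->|_]; last by rewrite scale0r.
by rewrite -{1}(add0m U_(k)%MM) addmK mpolyX0 scale1r.
Qed.

Lemma mulX_mderivX (i : 'I_n) (mo : 'X_{1..n}) :
  ('X_i : {mpoly R[n]}) * ('X_[mo])^`M(i) = (mo i)%:R *: 'X_[mo].
Proof.
rewrite mderivX; have [->|nz] := eqVneq (mo i) 0%N; first by rewrite !scale0r mulr0.
by rewrite -scalerAr -mpolyXD addmC submK // lep1mP.
Qed.
End MpolyDerivative.

Section DifferentialCalculus.
Variables (R : realType) (m : nat).
Local Notation P := (Pol R m).
Local Notation nx := (normx2 R m).
Local Notation nu := (normu2 R m).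
Local Notation ux := (ux R m).
Local Notation X := (@xv R m).
Local Notation U := (@uv R m).
Implicit Types (f g G : P).

HB.instance Definition _ j := GRing.Linear.copy (@dx R m j) (mderiv (@ix m j) : P -> P).
HB.instance Definition _ j := GRing.Linear.copy (@du R m j) (mderiv (@iu m j) : P -> P).

Definition Ex G : P := \sum_(j < m) X j * dx j G.
Definition Eu G : P := \sum_(j < m) U j * du j G.

Lemma Lapx_is_linear : linear (@Lapx R m).
Proof. by apply: sum_linear => j a f g; rewrite !linearP. Qed.
HB.instance Definition _ := GRing.isLinear.Build _ _ _ _ _ Lapx_is_linear.
Lemma Lapu_is_linear : linear (@Lapu R m).
Proof. by apply: sum_linear => j a f g; rewrite !linearP. Qed.
HB.instance Definition _ := GRing.isLinear.Build _ _ _ _ _ Lapu_is_linear.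
Lemma du_dx_is_linear : linear (@du_dx R m).
Proof. by apply: sum_linear => j a f g; rewrite !linearP. Qed.
HB.instance Definition _ := GRing.isLinear.Build _ _ _ _ _ du_dx_is_linear.
Lemma x_du_is_linear : linear (@x_du R m).
Proof. by apply: sum_linear => j a f g; rewrite linearP mulrDr scalerAr. Qed.
HB.instance Definition _ := GRing.isLinear.Build _ _ _ _ _ x_du_is_linear.
Lemma u_dx_is_linear : linear (@u_dx R m).
Proof. by apply: sum_linear => j a f g; rewrite linearP mulrDr scalerAr. Qed.
HB.instance Definition _ := GRing.isLinear.Build _ _ _ _ _ u_dx_is_linear.
Lemma Ex_is_linear : linear Ex.
Proof. by apply: sum_linear => j a f g; rewrite linearP mulrDr scalerAr. Qed.
HB.instance Definition _ := GRing.isLinear.Build _ _ _ _ _ Ex_is_linear.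
Lemma Eu_is_linear : linear Eu.
Proof. by apply: sum_linear => j a f g; rewrite linearP mulrDr scalerAr. Qed.
HB.instance Definition _ := GRing.isLinear.Build _ _ _ _ _ Eu_is_linear.

Lemma dx_xv j k : dx k (X j) = (j == k)%:R.
Proof. by rewrite /dx mderivXX /ix eq_lshift. Qed.
Lemma dx_uv j k : dx k (U j) = 0.
Proof. by rewrite /dx mderivXX /ix /iu eq_rlshift. Qed.
Lemma du_xv j k : du k (X j) = 0.
Proof. by rewrite /du mderivXX /ix /iu eq_lrshift. Qed.
Lemma du_uv j k : du k (U j) = (j == k)%:R.
Proof. by rewrite /du mderivXX /iu eq_rshift. Qed.

Lemma dxM k f g : dx k (f * g) = dx k f * g + f * dx k g.
Proof. exact: mderivM. Qed.
Lemma duM k f g : du k (f * g) = du k f * g + f * du k g.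
Proof. exact: mderivM. Qed.
Lemma dx_comm k l f : dx k (dx l f) = dx l (dx k f).
Proof. exact: mderiv_comm. Qed.
Lemma du_comm k l f : du k (du l f) = du l (du k f).
Proof. exact: mderiv_comm. Qed.
Lemma dxdu k l f : dx k (du l f) = du l (dx k f).
Proof. exact: mderiv_comm. Qed.

Lemma dx_nx k : dx k nx = X k *+ 2.
Proof.
rewrite /normx2 raddf_sum /=.
under eq_bigr do rewrite expr2 dxM !dx_xv mulr_natl mulr_natr -mulr2n.
by rewrite sumrMnl sum_kronecker.
Qed.
Lemma du_nu k : du k nu = U k *+ 2.
Proof.
rewrite /normu2 raddf_sum /=.
under eq_bigr do rewrite expr2 duM !du_uv mulr_natl mulr_natr -mulr2n.
by rewrite sumrMnl sum_kronecker.
Qed.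
Lemma du_nx k : du k nx = 0.
Proof.
rewrite /normx2 raddf_sum /= big1 // => j _.
by rewrite expr2 duM !du_xv mul0r mulr0 addr0.
Qed.
Lemma dx_nu k : dx k nu = 0.
Proof.
rewrite /normu2 raddf_sum /= big1 // => j _.
by rewrite expr2 dxM !dx_uv mul0r mulr0 addr0.
Qed.
Lemma dx_ux k : dx k ux = U k.
Proof.
rewrite /Defs.ux raddf_sum /=.
under eq_bigr do rewrite dxM dx_uv dx_xv mul0r add0r mulr_natr.
by rewrite sum_kronecker.
Qed.
Lemma du_ux k : du k ux = X k.
Proof.
rewrite /Defs.ux raddf_sum /=.
under eq_bigr do rewrite duM du_uv du_xv mulr0 addr0 mulr_natl.
by rewrite sum_kronecker.
Qed.

Lemma dx_xM i j G : dx i (X j * G) = G *+ (j == i) + X j * dx i G.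
Proof. by rewrite dxM dx_xv mulr_natl. Qed.
Lemma du_uM i j G : du i (U j * G) = G *+ (j == i) + U j * du i G.
Proof. by rewrite duM du_uv mulr_natl. Qed.
Lemma dx_uM i j G : dx i (U j * G) = U j * dx i G.
Proof. by rewrite dxM dx_uv mul0r add0r. Qed.
Lemma du_xM i j G : du i (X j * G) = X j * du i G.
Proof. by rewrite duM du_xv mul0r add0r. Qed.
Lemma dx_nxM i G : dx i (nx * G) = X i * G *+ 2 + nx * dx i G.
Proof. by rewrite dxM dx_nx mulrnAl. Qed.
Lemma du_nuM i G : du i (nu * G) = U i * G *+ 2 + nu * du i G.
Proof. by rewrite duM du_nu mulrnAl. Qed.
Lemma dx_nuM i G : dx i (nu * G) = nu * dx i G.
Proof. by rewrite dxM dx_nu mul0r add0r. Qed.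
Lemma du_nxM i G : du i (nx * G) = nx * du i G.
Proof. by rewrite duM du_nx mul0r add0r. Qed.
Lemma dx_uxM i G : dx i (ux * G) = U i * G + ux * dx i G.
Proof. by rewrite dxM dx_ux. Qed.
Lemma du_uxM i G : du i (ux * G) = X i * G + ux * du i G.
Proof. by rewrite duM du_ux. Qed.

Lemma dx_x_du i G : dx i (x_du G) = du i G + x_du (dx i G).
Proof.
rewrite raddf_sum /=; under eq_bigr do rewrite dx_xM dxdu.
by rewrite big_split sum_kronecker.
Qed.
Lemma du_x_du i G : du i (x_du G) = x_du (du i G).
Proof. by rewrite raddf_sum /=; apply: eq_bigr => j _; rewrite du_xM du_comm. Qed.
Lemma du_u_dx i G : du i (u_dx G) = dx i G + u_dx (du i G).
Proof.
rewrite raddf_sum /=; under eq_bigr do rewrite du_uM -dxdu.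
by rewrite big_split sum_kronecker.
Qed.
Lemma dx_u_dx i G : dx i (u_dx G) = u_dx (dx i G).
Proof. by rewrite raddf_sum /=; apply: eq_bigr => j _; rewrite dx_uM dx_comm. Qed.
Lemma dx_Ex i G : dx i (Ex G) = dx i G + Ex (dx i G).
Proof.
rewrite raddf_sum /=; under eq_bigr do rewrite dx_xM dx_comm.
by rewrite big_split sum_kronecker.
Qed.
Lemma du_Ex i G : du i (Ex G) = Ex (du i G).
Proof. by rewrite raddf_sum /=; apply: eq_bigr => j _; rewrite du_xM dxdu. Qed.
Lemma du_Eu i G : du i (Eu G) = du i G + Eu (du i G).
Proof.
rewrite raddf_sum /=; under eq_bigr do rewrite du_uM du_comm.
by rewrite big_split sum_kronecker.
Qed.
Lemma dx_Eu i G : dx i (Eu G) = Eu (dx i G).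
Proof. by rewrite raddf_sum /=; apply: eq_bigr => j _; rewrite dx_uM dxdu. Qed.
Lemma dx_du_dx i G : dx i (du_dx G) = du_dx (dx i G).
Proof. by rewrite raddf_sum /=; apply: eq_bigr => j _; rewrite dxdu dx_comm. Qed.
Lemma du_du_dx i G : du i (du_dx G) = du_dx (du i G).
Proof. by rewrite raddf_sum /=; apply: eq_bigr => j _; rewrite du_comm dxdu. Qed.

Lemma Lapx_x_du G : Lapx (x_du G) = x_du (Lapx G) + du_dx G *+ 2.
Proof.
rewrite /Lapx /du_dx raddf_sum -!sumrMnl -big_split /=; apply: eq_bigr => j _.
by rewrite dx_x_du raddfD /= dx_x_du dxdu mulr2n [RHS]addrC addrA.
Qed.
Lemma Lapu_u_dx G : Lapu (u_dx G) = u_dx (Lapu G) + du_dx G *+ 2.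
Proof.
rewrite /Lapu /du_dx raddf_sum -!sumrMnl -big_split /=; apply: eq_bigr => j _.
by rewrite du_u_dx raddfD /= du_u_dx dxdu mulr2n [RHS]addrC addrA.
Qed.
Lemma Lapu_x_du G : Lapu (x_du G) = x_du (Lapu G).
Proof. by rewrite /Lapu raddf_sum /=; apply: eq_bigr => j _; rewrite !du_x_du. Qed.
Lemma Lapx_u_dx G : Lapx (u_dx G) = u_dx (Lapx G).
Proof. by rewrite /Lapx raddf_sum /=; apply: eq_bigr => j _; rewrite !dx_u_dx. Qed.
Lemma Lapx_du_dx G : Lapx (du_dx G) = du_dx (Lapx G).
Proof. by rewrite /Lapx raddf_sum /=; apply: eq_bigr => j _; rewrite !dx_du_dx. Qed.
Lemma Lapu_du_dx G : Lapu (du_dx G) = du_dx (Lapu G).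
Proof. by rewrite /Lapu raddf_sum /=; apply: eq_bigr => j _; rewrite !du_du_dx. Qed.

Lemma Lapx_nxM G : Lapx (nx * G) = nx * Lapx G + Ex G *+ 4 + G *+ (2 * m).
Proof.
rewrite /Lapx /Ex mulnC mulrnA -[m in G *+ m]card_ord -sumr_const.
rewrite mulr_sumr -!sumrMnl -!big_split /=; apply: eq_bigr => j _.
by rewrite dx_nxM raddfD raddfMn /= dx_xM dx_nxM eqxx mulr1n; ring.
Qed.
Lemma Lapu_nuM G : Lapu (nu * G) = nu * Lapu G + Eu G *+ 4 + G *+ (2 * m).
Proof.
rewrite /Lapu /Eu mulnC mulrnA -[m in G *+ m]card_ord -sumr_const.
rewrite mulr_sumr -!sumrMnl -!big_split /=; apply: eq_bigr => j _.
by rewrite du_nuM raddfD raddfMn /= du_uM du_nuM eqxx mulr1n; ring.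
Qed.
Lemma Lapx_nuM G : Lapx (nu * G) = nu * Lapx G.
Proof. by rewrite /Lapx mulr_sumr; apply: eq_bigr => j _; rewrite !dx_nuM. Qed.
Lemma Lapu_nxM G : Lapu (nx * G) = nx * Lapu G.
Proof. by rewrite /Lapu mulr_sumr; apply: eq_bigr => j _; rewrite !du_nxM. Qed.
Lemma Lapx_uxM G : Lapx (ux * G) = ux * Lapx G + u_dx G *+ 2.
Proof.
rewrite /Lapx /u_dx mulr_sumr -!sumrMnl -big_split /=; apply: eq_bigr => j _.
by rewrite dx_uxM raddfD /= dx_uM dx_uxM; ring.
Qed.
Lemma Lapu_uxM G : Lapu (ux * G) = ux * Lapu G + x_du G *+ 2.
Proof.
rewrite /Lapu /x_du mulr_sumr -!sumrMnl -big_split /=; apply: eq_bigr => j _.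
by rewrite du_uxM raddfD /= du_xM du_uxM; ring.
Qed.

Lemma du_dx_nxM G : du_dx (nx * G) = nx * du_dx G + x_du G *+ 2.
Proof.
rewrite /du_dx /x_du mulr_sumr -!sumrMnl -big_split /=; apply: eq_bigr => j _.
by rewrite dx_nxM raddfD raddfMn /= du_xM du_nxM; ring.
Qed.
Lemma du_dx_nuM G : du_dx (nu * G) = nu * du_dx G + u_dx G *+ 2.
Proof.
rewrite /du_dx /u_dx mulr_sumr -!sumrMnl -big_split /=; apply: eq_bigr => j _.
by rewrite dx_nuM du_nuM -dxdu; ring.
Qed.
Lemma du_dx_uxM G : du_dx (ux * G) = ux * du_dx G + Ex G + Eu G + G *+ m.
Proof.
rewrite /du_dx /Ex /Eu -[m in G *+ m]card_ord -sumr_const mulr_sumr -!big_split /=.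
apply: eq_bigr => j _.
by rewrite dx_uxM raddfD /= du_uM du_uxM eqxx mulr1n; ring.
Qed.
Lemma x_du_nuM G : x_du (nu * G) = nu * x_du G + ux * G *+ 2.
Proof.
rewrite /x_du mulr_sumr [ux]/Defs.ux [Y in _ + Y *+ 2]mulr_suml -sumrMnl.
by rewrite -big_split /=; apply: eq_bigr => j _; rewrite du_nuM; ring.
Qed.
Lemma du_dx_nxnuM G : du_dx (nx * nu * G) =
  nx * nu * du_dx G + (nx * u_dx G) *+ 2 + (nu * x_du G) *+ 2 + ux * G *+ 4.
Proof.
rewrite -mulrA du_dx_nxM du_dx_nuM x_du_nuM mulrDr mulrA mulrnAr mulrnDl.
(* an unrestricted [addrA] would also try to match the right-hand side,
   forcing expensive conversions between distinct polynomials *)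
by rewrite -mulrnA [LHS]addrA.
Qed.

Lemma Ex_du_dx G : Ex (du_dx G) = du_dx (Ex G) - du_dx G.
Proof.
suff -> : du_dx (Ex G) = du_dx G + Ex (du_dx G) by rewrite addrC addKr.
rewrite {1}/du_dx; under eq_bigr do rewrite dx_Ex raddfD /= du_Ex.
by rewrite big_split /= raddf_sum.
Qed.
Lemma Eu_du_dx G : Eu (du_dx G) = du_dx (Eu G) - du_dx G.
Proof.
suff -> : du_dx (Eu G) = du_dx G + Eu (du_dx G) by rewrite addrC addKr.
rewrite {1}/du_dx; under eq_bigr do rewrite dx_Eu du_Eu.
by rewrite big_split /= raddf_sum.
Qed.
Lemma Ex_u_dx G : Ex (u_dx G) = u_dx (Ex G) - u_dx G.
Proof.
suff -> : u_dx (Ex G) = u_dx G + Ex (u_dx G) by rewrite addrC addKr.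
rewrite {1}/u_dx; under eq_bigr do rewrite dx_Ex mulrDr.
rewrite big_split /=; congr (_ + _).
under [RHS]eq_bigr do rewrite dx_u_dx /u_dx mulr_sumr.
rewrite exchange_big /=; apply: eq_bigr => k _; rewrite mulr_sumr.
by apply: eq_bigr => j _; rewrite dx_comm mulrCA.
Qed.
Lemma Eu_x_du G : Eu (x_du G) = x_du (Eu G) - x_du G.
Proof.
suff -> : x_du (Eu G) = x_du G + Eu (x_du G) by rewrite addrC addKr.
rewrite {1}/x_du; under eq_bigr do rewrite du_Eu mulrDr.
rewrite big_split /=; congr (_ + _).
under [RHS]eq_bigr do rewrite du_x_du /x_du mulr_sumr.
rewrite exchange_big /=; apply: eq_bigr => k _; rewrite mulr_sumr.
by apply: eq_bigr => j _; rewrite du_comm mulrCA.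
Qed.
Lemma Ex_nuM G : Ex (nu * G) = nu * Ex G.
Proof. by rewrite /Ex mulr_sumr; apply: eq_bigr => j _; rewrite dx_nuM mulrCA. Qed.
Lemma Eu_nxM G : Eu (nx * G) = nx * Eu G.
Proof. by rewrite /Eu mulr_sumr; apply: eq_bigr => j _; rewrite du_nxM mulrCA. Qed.

Lemma Ex_mpolyX mo : Ex 'X_[mo] = (degx mo)%:R *: 'X_[mo].
Proof.
rewrite /degx natr_sum scaler_suml; apply: eq_bigr => j _; exact: mulX_mderivX.
Qed.
Lemma Eu_mpolyX mo : Eu 'X_[mo] = (degu mo)%:R *: 'X_[mo].
Proof.
rewrite /degu natr_sum scaler_suml; apply: eq_bigr => j _; exact: mulX_mderivX.
Qed.

Lemma Ex_bihomog p q G : bihomog p q G -> Ex G = p%:R *: G.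
Proof.
move=> hG; rewrite {1 2}[G]mpolyE raddf_sum scaler_sumr !big_seq.
apply: eq_bigr => mo /hG[hp _] /=.
by rewrite linearZ /= Ex_mpolyX hp scalerA mulrC -scalerA.
Qed.
Lemma Eu_bihomog p q G : bihomog p q G -> Eu G = q%:R *: G.
Proof.
move=> hG; rewrite {1 2}[G]mpolyE raddf_sum scaler_sumr !big_seq.
apply: eq_bigr => mo /hG[_ hq] /=.
by rewrite linearZ /= Eu_mpolyX hq scalerA mulrC -scalerA.
Qed.
End DifferentialCalculus.

Section FischerInnerProduct.
Variables (C : numClosedFieldType) (n : nat).
Implicit Types (f g h : {mpoly C[n]}).

Definition mfact (mo : 'X_{1..n}) : nat := (\prod_(i < n) (mo i)`!)%N.

Definition fischer f g : C :=
  \sum_(mo <- msupp f) (mfact mo)%:R * f@_mo * (g@_mo)^*.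

Lemma fischer_seq f g (s : seq 'X_{1..n}) : uniq s -> {subset msupp f <= s} ->
  fischer f g = \sum_(mo <- s) (mfact mo)%:R * f@_mo * (g@_mo)^*.
Proof.
move=> us sub; rewrite (bigID (mem (msupp f))) /= [X in _ + X]big1 ?addr0.
  rewrite -big_filter; apply/perm_big/uniq_perm; rewrite ?filter_uniq ?msupp_uniq //.
  by move=> mo; rewrite mem_filter andb_idr // => /sub.
by move=> mo /memN_msupp_eq0 ->; rewrite mulr0 mul0r.
Qed.

Lemma fischerDl f1 f2 g : fischer (f1 + f2) g = fischer f1 g + fischer f2 g.
Proof.
set s := undup (msupp f1 ++ msupp f2).
have sub1 : {subset msupp f1 <= s} by move=> mo hm; rewrite mem_undup mem_cat hm.
have sub2 : {subset msupp f2 <= s} by move=> mo hm; rewrite mem_undup mem_cat hm orbT.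
have sub12 : {subset msupp (f1 + f2) <= s}.
  by move=> mo /msuppD_le; rewrite mem_undup.
rewrite !(@fischer_seq _ g s) ?undup_uniq // -big_split /=.
by apply: eq_bigr => mo _; rewrite mcoeffD mulrDr mulrDl.
Qed.

Lemma fischerDr f g1 g2 : fischer f (g1 + g2) = fischer f g1 + fischer f g2.
Proof.
rewrite /fischer -big_split /=; apply: eq_bigr => mo _.
by rewrite mcoeffD rmorphD mulrDr.
Qed.

Lemma fischer0l g : fischer 0 g = 0.
Proof. by rewrite /fischer msupp0 big_nil. Qed.

Lemma fischer0r f : fischer f 0 = 0.
Proof. by rewrite /fischer big1 // => mo _; rewrite mcoeff0 rmorph0 mulr0. Qed.

Lemma fischer_suml (I : Type) (r : seq I) (F : I -> {mpoly C[n]}) g :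
  fischer (\sum_(i <- r) F i) g = \sum_(i <- r) fischer (F i) g.
Proof.
exact: (big_morph (fun f => fischer f g) (fun f1 f2 => fischerDl f1 f2 g)
                  (fischer0l g)).
Qed.

Lemma fischer_sumr (I : Type) (r : seq I) f (F : I -> {mpoly C[n]}) :
  fischer f (\sum_(i <- r) F i) = \sum_(i <- r) fischer f (F i).
Proof. exact: (big_morph (fischer f) (fischerDr f) (fischer0r f)). Qed.

Lemma mfactD1 (i : 'I_n) mo : mfact (U_(i) + mo)%MM = (mfact mo * (mo i).+1)%N.
Proof.
rewrite /mfact (bigD1 i) //= [in RHS](bigD1 i) //= mnmDE mnm1E eqxx add1n factS.
rewrite (eq_bigr (fun k => (mo k)`!)) => [|k nk]; first by rewrite [RHS]mulnC mulnA.
by rewrite mnmDE mnm1E eq_sym (negbTE nk).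
Qed.

Lemma fischerXl (i : 'I_n) f g : fischer ('X_i * f) g = fischer f g^`M(i).
Proof.
rewrite mulrC /fischer (perm_big _ (msuppMX f U_(i))) big_map.
apply: eq_bigr => mo _.
by rewrite mcoeffMX mcoeff_mderiv mfactD1 addmC rmorphMn natrM -mulr_natr; ring.
Qed.

Lemma mfact_gt0 mo : (0 < mfact mo)%N.
Proof. by rewrite prodn_gt0 // => i; exact: fact_gt0. Qed.

Lemma fischer_eq0 h : fischer h h = 0 -> h = 0.
Proof.
move=> /eqP; rewrite psumr_eq0 => [/allP h0|mo _]; last first.
  by rewrite -mulrA mulr_ge0 ?ler0n ?mul_conjC_ge0.
apply/mpolyP => mo; rewrite mcoeff0.
have [/h0|/memN_msupp_eq0 //] := boolP (mo \in msupp h).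
by rewrite -mulrA mulf_eq0 pnatr_eq0 mul_conjC_eq0 eqn0Ngt mfact_gt0 => /eqP.
Qed.
End FischerInnerProduct.

Section HarmonicProjection.
Variables (R : realType) (m : nat).
Local Notation P := (Pol R m).
Local Notation nx := (normx2 R m).
Local Notation nu := (normu2 R m).
Implicit Types (f g h : P).

Lemma fischer_nxM f h : fischer (nx * f) h = fischer f (Lapx h).
Proof.
rewrite /normx2 mulr_suml fischer_suml fischer_sumr; apply: eq_bigr => j _.
by rewrite expr2 -mulrA !fischerXl.
Qed.
Lemma fischer_nuM f h : fischer (nu * f) h = fischer f (Lapu h).
Proof.
rewrite /normu2 mulr_suml fischer_suml fischer_sumr; apply: eq_bigr => j _.
by rewrite expr2 -mulrA !fischerXl.
Qed.

Lemma harmonic_nxnu_eq0 h a b : harmonic h -> h = nx * a + nu * b -> h = 0.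
Proof.
move=> [hx hu] E; apply: fischer_eq0.
by rewrite {1}E fischerDl fischer_nxM fischer_nuM hx hu !fischer0r addr0.
Qed.

Lemma harmonic0 : harmonic (0 : P).
Proof. by split; rewrite raddf0. Qed.
Lemma harmonicD f g : harmonic f -> harmonic g -> harmonic (f + g).
Proof. by move=> [fx fu] [gx gu]; split; rewrite raddfD /= ?fx ?fu ?gx ?gu addr0. Qed.
Lemma harmonicZ c f : harmonic f -> harmonic (c *: f).
Proof. by move=> [fx fu]; split; rewrite linearZ /= ?fx ?fu scaler0. Qed.

Lemma pis_spec_decomp f h :
  pis_spec f h -> harmonic h /\ exists a b, f = h + nx * a + nu * b.
Proof.
move=> [[|N] [c [//= _ [hc [-> ->]]]]]; split => //.
exists (\sum_(a < N) \sum_(b < N.+1) nx ^+ a * nu ^+ b * c a.+1 b).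
exists (\sum_(b < N) nu ^+ b * c 0%N b.+1).
rewrite big_ord_recl big_ord_recl !expr0 !mul1r addrAC !mulr_sumr.
congr (_ + _ + _); apply: eq_bigr => a _; rewrite lift0 exprS.
  by rewrite mulr_sumr; apply: eq_bigr => b _; rewrite !mulrA.
by rewrite mul1r mulrA.
Qed.

Lemma pis_eq f h : (exists h', pis_spec f h') -> harmonic h ->
  (exists a b, f = h + nx * a + nu * b) -> pis f = h.
Proof.
rewrite /pis => /(epsilon_spec (inhabits 0)); set e := epsilon _ _.
move=> /pis_spec_decomp [he [a [b Ee]]] hh [a' [b' Eh]].
apply/eqP; rewrite -subr_eq0; apply/eqP/(@harmonic_nxnu_eq0 _ (a' - a) (b' - b)).
  by apply: harmonicD he _; rewrite -scaleN1r; apply: harmonicZ.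
have -> : e - h = (f - h) - (f - e) by ring.
by rewrite {1}Eh Ee; ring.
Qed.

Definition fischer_head f h := harmonic h /\ exists a b c,
  [/\ harmonic a, harmonic b, harmonic c & f = h + nx * a + nu * b + nx * nu * c].

Lemma fischer_head_intro f h a b c :
  harmonic h -> harmonic a -> harmonic b -> harmonic c ->
  f = h + nx * a + nu * b + nx * nu * c -> fischer_head f h.
Proof. by move=> hh ha hb hc E; split=> //; exists a, b, c. Qed.

Lemma pis_fischer_head f h : fischer_head f h -> pis f = h.
Proof.
move=> [hh [a [b [c [ha hb hc E]]]]]; apply: pis_eq => //; last first.
  by exists (a + nu * c), b; rewrite E; ring.
exists h, 2%N, (fun i j => match i, j with
  | 0, 0 => h | 0, _ => b | _, 0 => a | _, _ => c end)%N.
split; first by [].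
split; first by case=> [|i] [|j]; [exact: hh | exact: hb | exact: ha | exact: hc].
split=> //; rewrite E !big_ord_recl !big_ord0 /= !expr0 !expr1 !mul1r !mulr1 !addr0.
ring.
Qed.

Lemma fischer_head_harmonic h : harmonic h -> fischer_head h h.
Proof.
move=> hh; apply: (fischer_head_intro hh harmonic0 harmonic0 harmonic0).
by rewrite !mulr0 !addr0.
Qed.

Lemma fischer_headD f h f' h' :
  fischer_head f h -> fischer_head f' h' -> fischer_head (f + f') (h + h').
Proof.
move=> [hh [a [b [c [ha hb hc ->]]]]] [hh' [a' [b' [c' [ha' hb' hc' ->]]]]].
apply: (fischer_head_intro (harmonicD hh hh') (harmonicD ha ha') (harmonicD hb hb')
                      (harmonicD hc hc')).
ring.
Qed.

Lemma fischer_headZ k f h : fischer_head f h -> fischer_head (k *: f) (k *: h).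
Proof.
move=> [hh [a [b [c [ha hb hc ->]]]]].
apply: (fischer_head_intro (harmonicZ k hh) (harmonicZ k ha) (harmonicZ k hb)
                      (harmonicZ k hc)).
by rewrite !scalerDr !scalerAr.
Qed.

Lemma fischer_headMn f h k : fischer_head f h -> fischer_head (f *+ k) (h *+ k).
Proof. by rewrite -[f *+ k]scaler_nat -[h *+ k]scaler_nat; apply: fischer_headZ. Qed.

Lemma fischer_headB f h f' h' :
  fischer_head f h -> fischer_head f' h' -> fischer_head (f - f') (h - h').
Proof.
move=> Fh Fh'; apply: fischer_headD Fh _.
by rewrite -(scaleN1r f') -(scaleN1r h'); apply: fischer_headZ.
Qed.

Lemma fischer_head_nxM g : harmonic g -> fischer_head (nx * g) 0.
Proof.
move=> hg; apply: (fischer_head_intro harmonic0 hg harmonic0 harmonic0).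
by rewrite !mulr0 !addr0 add0r.
Qed.
Lemma fischer_head_nuM g : harmonic g -> fischer_head (nu * g) 0.
Proof.
move=> hg; apply: (fischer_head_intro harmonic0 harmonic0 hg harmonic0).
by rewrite !mulr0 !addr0 add0r.
Qed.
Lemma fischer_head_nxnuM g : harmonic g -> fischer_head (nx * nu * g) 0.
Proof.
move=> hg; apply: (fischer_head_intro harmonic0 harmonic0 harmonic0 hg).
by rewrite !mulr0 !addr0 add0r.
Qed.
End HarmonicProjection.
Arguments harmonic0 {R m}.

Section ExplicitProjections.
Variables (R : realType) (m : nat).
Local Notation P := (Pol R m).
Local Notation nx := (normx2 R m).
Local Notation nu := (normu2 R m).
Local Notation ux := (ux R m).
Local Notation Ex := (@Ex R m).
Local Notation Eu := (@Eu R m).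
Implicit Types (G : P) (d e : Cx R).

Definition gam d : Cx R := m%:R + 2%:R * d - 2%:R.

Lemma Lapx_nxM_harmonic d G :
  Lapx G = 0 -> Ex G = (d - 1) *: G -> Lapx (nx * G) = (gam d *+ 2) *: G.
Proof.
rewrite Lapx_nxM => -> ->; rewrite mulr0 add0r scalerMnl -[G *+ _]scaler_nat.
by rewrite -scalerDl /gam natrM; congr (_ *: _); ring.
Qed.
Lemma Lapu_nuM_harmonic e G :
  Lapu G = 0 -> Eu G = (e - 1) *: G -> Lapu (nu * G) = (gam e *+ 2) *: G.
Proof.
rewrite Lapu_nuM => -> ->; rewrite mulr0 add0r scalerMnl -[G *+ _]scaler_nat.
by rewrite -scalerDl /gam natrM; congr (_ *: _); ring.
Qed.

Lemma du_dx_harmonic G : harmonic G -> harmonic (du_dx G).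
Proof. by case=> hx hu; split; rewrite ?Lapx_du_dx ?Lapu_du_dx ?hx ?hu raddf0. Qed.
Lemma Ex_du_dx_eigen d G : Ex G = d *: G -> Ex (du_dx G) = (d - 1) *: du_dx G.
Proof. by move=> hE; rewrite Ex_du_dx hE linearZ scalerBl scale1r. Qed.
Lemma Eu_du_dx_eigen e G : Eu G = e *: G -> Eu (du_dx G) = (e - 1) *: du_dx G.
Proof. by move=> hE; rewrite Eu_du_dx hE linearZ scalerBl scale1r. Qed.

Definition Sx_expl d G : P := x_du G - (gam d)^-1 *: (nx * du_dx G).
Definition Su_expl e G : P := u_dx G - (gam e)^-1 *: (nu * du_dx G).
Definition C_expl d e G : P :=
  ux * G - (gam d)^-1 *: (nx * Su_expl e G) - (gam e)^-1 *: (nu * Sx_expl d G)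
  - ((gam d)^-1 * (gam e)^-1) *: (nx * nu * du_dx G).

Lemma Lapx_B3Z a b c (f g h k : P) :
  Lapx (f - a *: g - b *: h - c *: k) =
  Lapx f - a *: Lapx g - b *: Lapx h - c *: Lapx k.
Proof. exact: linearB3Z. Qed.
Lemma Lapu_B3Z a b c (f g h k : P) :
  Lapu (f - a *: g - b *: h - c *: k) =
  Lapu f - a *: Lapu g - b *: Lapu h - c *: Lapu k.
Proof. exact: linearB3Z. Qed.
Lemma du_dx_B3Z a b c (f g h k : P) :
  du_dx (f - a *: g - b *: h - c *: k) =
  du_dx f - a *: du_dx g - b *: du_dx h - c *: du_dx k.
Proof. exact: linearB3Z. Qed.

Section Eigen.
Context {d e : Cx R} {G : P}.
Hypotheses (hG : harmonic G) (hEx : Ex G = d *: G) (hEu : Eu G = e *: G).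
Hypotheses (gd : gam d != 0) (ge : gam e != 0).

Lemma Sx_expl_harmonic : harmonic (Sx_expl d G).
Proof.
have [[hx hu] [hAx hAu]] := (hG, du_dx_harmonic hG).
split; rewrite /Sx_expl linearB linearZ /=.
  rewrite Lapx_x_du hx raddf0 add0r (Lapx_nxM_harmonic hAx (Ex_du_dx_eigen hEx)).
  by rewrite scalerVMnK // subrr.
by rewrite Lapu_x_du Lapu_nxM hu hAu raddf0 mulr0 scaler0 subr0.
Qed.
Lemma Su_expl_harmonic : harmonic (Su_expl e G).
Proof.
have [[hx hu] [hAx hAu]] := (hG, du_dx_harmonic hG).
split; rewrite /Su_expl linearB linearZ /=.
  by rewrite Lapx_u_dx Lapx_nuM hx hAx raddf0 mulr0 scaler0 subr0.
rewrite Lapu_u_dx hu raddf0 add0r (Lapu_nuM_harmonic hAu (Eu_du_dx_eigen hEu)).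
by rewrite scalerVMnK // subrr.
Qed.

Lemma Ex_Su_expl : Ex (Su_expl e G) = (d - 1) *: Su_expl e G.
Proof.
rewrite /Su_expl linearB linearZ /= Ex_u_dx Ex_nuM (Ex_du_dx_eigen hEx) hEx.
rewrite linearZ /= -scalerAr [RHS]scalerBr [in RHS]scalerBl scale1r !scalerA.
by rewrite [_ * (_ - 1)]mulrC.
Qed.
Lemma Eu_Sx_expl : Eu (Sx_expl d G) = (e - 1) *: Sx_expl d G.
Proof.
rewrite /Sx_expl linearB linearZ /= Eu_x_du Eu_nxM (Eu_du_dx_eigen hEu) hEu.
rewrite linearZ /= -scalerAr [RHS]scalerBr [in RHS]scalerBl scale1r !scalerA.
by rewrite [_ * (_ - 1)]mulrC.
Qed.

Lemma C_expl_harmonic : harmonic (C_expl d e G).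
Proof.
have [[hx hu] [hAx hAu]] := (hG, du_dx_harmonic hG).
have [[hSx hSu] [hTx hTu]] := (Su_expl_harmonic, Sx_expl_harmonic).
have [hExA hEuA] := (Ex_du_dx_eigen hEx, Eu_du_dx_eigen hEu).
split; rewrite /C_expl ?Lapx_B3Z ?Lapu_B3Z.
  transitivity (u_dx G *+ 2 - Su_expl e G *+ 2 - 0
                - ((gam e)^-1 *: (nu * du_dx G)) *+ 2).
    congr (_ - _ - _ - _).
    - by rewrite Lapx_uxM hx mulr0 add0r.
    - by rewrite (Lapx_nxM_harmonic hSx Ex_Su_expl) scalerVMnK.
    - by rewrite Lapx_nuM hTx mulr0 scaler0.
    rewrite [nx * nu * _]mulrAC [_ * nu]mulrC Lapx_nuM.
    rewrite (Lapx_nxM_harmonic hAx hExA) -scalerAr.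
    by rewrite [(gam d)^-1 * _]mulrC -scalerA scalerVMnK // scalerMnr.
  by rewrite /Su_expl subr0 -!mulrnBl subKr subrr mul0rn.
transitivity (x_du G *+ 2 - 0 - Sx_expl d G *+ 2
              - ((gam d)^-1 *: (nx * du_dx G)) *+ 2).
  congr (_ - _ - _ - _).
  - by rewrite Lapu_uxM hu mulr0 add0r.
  - by rewrite Lapu_nxM hSu mulr0 scaler0.
  - by rewrite (Lapu_nuM_harmonic hTu Eu_Sx_expl) scalerVMnK.
  rewrite -mulrA Lapu_nxM (Lapu_nuM_harmonic hAu hEuA) -scalerAr.
  by rewrite -scalerA scalerVMnK // scalerMnr.
by rewrite /Sx_expl subr0 -!mulrnBl subKr subrr mul0rn.
Qed.

Lemma fischer_head_x_du : fischer_head (x_du G) (Sx_expl d G).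
Proof.
apply: (fischer_head_intro Sx_expl_harmonic (harmonicZ (gam d)^-1 (du_dx_harmonic hG))
                      harmonic0 harmonic0).
by rewrite /Sx_expl !mulr0 !addr0 scalerAr subrK.
Qed.
Lemma fischer_head_u_dx : fischer_head (u_dx G) (Su_expl e G).
Proof.
apply: (fischer_head_intro Su_expl_harmonic harmonic0
                      (harmonicZ (gam e)^-1 (du_dx_harmonic hG)) harmonic0).
by rewrite /Su_expl !mulr0 !addr0 scalerAr subrK.
Qed.
Lemma fischer_head_uxM : fischer_head (ux * G) (C_expl d e G).
Proof.
apply: (fischer_head_intro C_expl_harmonic (harmonicZ (gam d)^-1 Su_expl_harmonic)
  (harmonicZ (gam e)^-1 Sx_expl_harmonic)
  (harmonicZ ((gam d)^-1 * (gam e)^-1) (du_dx_harmonic hG))).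
by rewrite /C_expl -!mul_mpolyC; ring.
Qed.
Lemma fischer_head_nx_u_dx : fischer_head (nx * u_dx G) 0.
Proof.
apply: (fischer_head_intro harmonic0 Su_expl_harmonic harmonic0
                      (harmonicZ (gam e)^-1 (du_dx_harmonic hG))).
by rewrite /Su_expl mulr0 addr0 add0r -mulrA scalerAr -mulrDr subrK.
Qed.
Lemma fischer_head_nu_x_du : fischer_head (nu * x_du G) 0.
Proof.
apply: (fischer_head_intro harmonic0 harmonic0 Sx_expl_harmonic
                      (harmonicZ (gam d)^-1 (du_dx_harmonic hG))).
by rewrite /Sx_expl mulr0 addr0 add0r [nx * nu]mulrC -mulrA scalerAr -mulrDr subrK.
Qed.

Lemma Sx_eigen : Sx G = Sx_expl d G.
Proof. exact: pis_fischer_head fischer_head_x_du. Qed.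
Lemma Su_eigen : Su G = Su_expl e G.
Proof. exact: pis_fischer_head fischer_head_u_dx. Qed.
Lemma Cop_eigen : Cop G = C_expl d e G.
Proof. exact: pis_fischer_head fischer_head_uxM. Qed.

Lemma du_dx_C_expl :
  du_dx (C_expl d e G) =
  ux * du_dx G + (d + e + m%:R) *: G
  - (gam d)^-1 *: (nx * du_dx (Su_expl e G) + x_du (Su_expl e G) *+ 2)
  - (gam e)^-1 *: (nu * du_dx (Sx_expl d G) + u_dx (Sx_expl d G) *+ 2)
  - ((gam d)^-1 * (gam e)^-1) *:
      (nx * nu * du_dx (du_dx G) + (nx * u_dx (du_dx G)) *+ 2
       + (nu * x_du (du_dx G)) *+ 2 + ux * du_dx G *+ 4).
Proof.
rewrite [LHS]du_dx_B3Z; apply: congrB3Z.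
- by rewrite du_dx_uxM hEx hEu -scaler_nat !scalerDl !addrA.
- exact: du_dx_nxM.
- exact: du_dx_nuM.
exact: du_dx_nxnuM.
Qed.
End Eigen.

Lemma Aop_harmonic G : harmonic G -> Aop G = du_dx G.
Proof. by move=> hG; apply/pis_fischer_head/fischer_head_harmonic/du_dx_harmonic. Qed.

Lemma gam_natB_neq0 p k : (2 * k.+1 < m)%N -> gam (p%:R - k%:R) != 0.
Proof.
move=> lt; have le : (2 * k.+1 <= m + 2 * p)%N by rewrite ltnW // ltn_addr.
have -> : gam (p%:R - k%:R) = (m + 2 * p - 2 * k.+1)%N%:R.
  by rewrite natrB // natrD !natrM -addn1 natrD /gam; ring.
by rewrite pnatr_eq0 subn_eq0 -ltnNge ltn_addr.
Qed.

Lemma eigH_shift d : - (d + m%:R / 2%:R) + 1 = - (gam d / 2%:R).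
Proof. by rewrite /gam; field. Qed.

Lemma eigH_shift_neq0 d : gam d != 0 -> - (d + m%:R / 2%:R) + 1 != 0.
Proof. by move=> gd; rewrite eigH_shift oppr_eq0 mulf_neq0 // invr_eq0 pnatr_eq0. Qed.

Lemma eigH_add d e :
  - (d + m%:R / 2%:R) + - (e + m%:R / 2%:R) = - (d + e + m%:R).
Proof. by field. Qed.

Section Commutator.
Context {d e : Cx R} {H : P}.
Hypotheses (hH : harmonic H) (hEx : Ex H = d *: H) (hEu : Eu H = e *: H).
Hypotheses (gd : gam d != 0) (ge : gam e != 0).
Hypotheses (gd1 : gam (d - 1) != 0) (ge1 : gam (e - 1) != 0).

Lemma Aop_Cop_gam :
  Aop (Cop H) =
    (1 - (2%:R / gam d) * (2%:R / gam e)) *: Cop (Aop H) + (d + e + m%:R) *: H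
    - (2%:R / gam d) *: Sx (Su H) - (2%:R / gam e) *: Su (Sx H).
Proof.
set A := du_dx H; set S := Su_expl e H; set T := Sx_expl d H.
have hA : harmonic A := du_dx_harmonic hH.
have hS : harmonic S := Su_expl_harmonic hH hEu ge.
have hT : harmonic T := Sx_expl_harmonic hH hEx gd.
have hExA : Ex A = (d - 1) *: A := Ex_du_dx_eigen hEx.
have hEuA : Eu A = (e - 1) *: A := Eu_du_dx_eigen hEu.
have hExS : Ex S = (d - 1) *: S := Ex_Su_expl hEx.
have hEuT : Eu T = (e - 1) *: T := Eu_Sx_expl hEu.
have FA := fischer_head_uxM hA hExA hEuA gd1 ge1.
have FS := fischer_headD (fischer_head_nxM (du_dx_harmonic hS))
                         (fischer_headMn 2 (fischer_head_x_du hS hExS gd1)).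
have FT := fischer_headD (fischer_head_nuM (du_dx_harmonic hT))
                         (fischer_headMn 2 (fischer_head_u_dx hT hEuT ge1)).
have FAA := fischer_headD (fischer_headD (fischer_headD
  (fischer_head_nxnuM (du_dx_harmonic hA))
  (fischer_headMn 2 (fischer_head_nx_u_dx hA hEuA ge1)))
  (fischer_headMn 2 (fischer_head_nu_x_du hA hExA gd1)))
  (fischer_headMn 4 FA).
have F := fischer_headB (fischer_headB (fischer_headB
  (fischer_headD FA (fischer_headZ (d + e + m%:R) (fischer_head_harmonic hH)))
  (fischer_headZ (gam d)^-1 FS)) (fischer_headZ (gam e)^-1 FT))
  (fischer_headZ ((gam d)^-1 * (gam e)^-1) FAA).
rewrite (Aop_harmonic hH) (Cop_eigen hA hExA hEuA gd1 ge1).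
rewrite (Su_eigen hH hEu ge) (Sx_eigen hH hEx gd).
rewrite (Sx_eigen hS hExS gd1) (Su_eigen hT hEuT ge1).
rewrite (Cop_eigen hH hEx hEu gd ge) /Aop du_dx_C_expl // (pis_fischer_head F).
(* abstracting the polynomial atoms keeps [ring] from unfolding them *)
move: (C_expl _ _ A) (Sx_expl _ S) (Su_expl _ T) (H) => CA SS TT H0.
by rewrite -!mul_mpolyC; ring.
Qed.

Lemma Aop_Cop_eigen :
  let hx := - (d + m%:R / 2%:R) in let hu := - (e + m%:R / 2%:R) in
  Aop (Cop H) =
    ((hx + hx * hu + hu) / ((hx + 1) * (hu + 1))) *: Cop (Aop H)
    - (hx + hu) *: H + (hx + 1)^-1 *: Sx (Su H) + (hu + 1)^-1 *: Su (Sx H).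
Proof.
move=> hx hu; rewrite /hx /hu Aop_Cop_gam ratio_shift ?eigH_shift_neq0 //.
by rewrite !eigH_shift eigH_add !invrN !invf_div mulrNN !scaleNr opprK.
Qed.
End Commutator.
End ExplicitProjections.

Theorem lemma3p5 (R : realType) (m : nat) (hm : (4 < m)%N)
  (p q : nat) (H : Pol R m) :
  bihomog p q H -> harmonic H ->
  let hx := eigHx R m p in
  let hu := eigHu R m q in
  Aop (Cop H) =
    ((hx + hx * hu + hu) / ((hx + 1) * (hu + 1))) *: Cop (Aop H)
    - (hx + hu) *: H
    + (hx + 1)^-1 *: Sx (Su H)
    + (hu + 1)^-1 *: Su (Sx H).
Proof.
move=> hb hH.
have g0 n : gam m (n%:R : Cx R) != 0.
  rewrite -[n%:R]subr0.
  exact: (@gam_natB_neq0 R m n 0 (ltn_trans (isT : 2 < 4)%N hm)).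
have g1 n : gam m (n%:R - 1 : Cx R) != 0 by exact: (@gam_natB_neq0 R m n 1 hm).
exact: (Aop_Cop_eigen hH (Ex_bihomog hb) (Eu_bihomog hb) (g0 p) (g0 q) (g1 p) (g1 q)).
Qed.
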